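(* Let $s$ be a scoring vector with all entries positive, let $k=(k_1,\ldots,k_n)$ be a vector of non-negative integers with $\sum_i k_i=m$, let $c_i=\sum_{l<i}k_l$, $k_{\min}=\min_i k_i$, and let $P$ be any preference profile. Then $$\mathcal{P}^u_{AtoP}\le\frac{\sum_{i=1}^n\sum_{j=1}^{k_i}s_j}{\sum_{j=1}^m s_j},\qquad \mathcal{P}^e_{AtoP}\le\frac{\sum_{j=1}^{k_{\min}}s_j}{\min_{i\in[n]}\sum_{j=c_i+1}^{c_i+k_i}s_j},\qquad \mathcal{P}^n_{AtoP}\le\frac{\prod_{i=1}^n\sum_{j=1}^{k_i}s_j}{\prod_{i=1}^n\sum_{j=c_i+1}^{c_i+k_i}s_j}.$$
   Context: There are $n$ agents $a_1,\ldots,a_n$ and $m$ items. A preference profile $P=(\succ_{a_1},\ldots,\succ_{a_n})$ assigns to each agent a strict ranking of the items. A scoring vector $s=(s_1,\ldots,s_m)$ satisfies $s_1\ge\cdots\ge s_m$; an agent's value for her $j$-th preferred item is $s_j$, utilities are additive. Given $k$, agent $a_1$ first picks $k_1$ items, then $a_2$ picks $k_2$ of the remaining ones, etc., each greedily picking her most preferred remaining items; $U^k_P(a)$ is the total score $a$ receives. $SW^u_P(k)=\sum_a U^k_P(a)$, $SW^e_P(k)=\min_a U^k_P(a)$, $SW^n_P(k)=\prod_a U^k_P(a)$. For a permutation $\pi$ of $[n]$, $P_\pi$ is the profile obtained from $P$ by permuting the agents' rankings according to $\pi$. The price of assignment of agents to positions is $\mathcal{P}^x_{AtoP}=\max_{\pi}SW^x_{P_\pi}(k)/\min_{\pi}SW^x_{P_\pi}(k)$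 for $x\in\{u,e,n\}$, with $\pi$ ranging over all permutations of $[n]$. *)

From HB Require Import structures.
From mathcomp Require Import all_boot all_order all_algebra all_fingroup.
Set Implicit Arguments. Unset Strict Implicit. Unset Printing Implicit Defensive.
Import Order.TTheory GRing.Theory Num.Theory.
Local Open Scope ring_scope.

(* Items are 'I_m, agents are 'I_n (agent a_{i+1} is index i, 0-based).
   A strict ranking of the items is a permutation sigma : {perm 'I_m},
   where sigma j is the item at (0-based) position j; the rank of item x
   is sigma^-1 x.  Scoring vector s : 'I_m -> R, s j = s_{j+1}. *)

Definition scoring_vector (R : realFieldType) (m : nat) (s : 'I_m -> R) : Prop :=
  forall i j : 'I_m, (i <= j)%N -> s j <= s i.

Definition pref_order (m : nat) (sigma : {perm 'I_m}) : seq 'I_m :=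
  [seq sigma j | j <- enum 'I_m].

Definition pick (m : nat) (sigma : {perm 'I_m}) (avail : {set 'I_m}) (k : nat)
  : seq 'I_m := take k [seq x <- pref_order sigma | x \in avail].

Fixpoint alloc (m : nat) (avail : {set 'I_m}) (l : seq ({perm 'I_m} * nat))
  : seq (seq 'I_m) :=
  match l with
  | [::] => [::]
  | (sigma, k) :: l' =>
      let p := pick sigma avail k in
      p :: alloc (avail :\: [set x in p]) l'
  end.

Definition utility (R : realFieldType) (n m : nat) (s : 'I_m -> R)
  (k : 'I_n -> nat) (P : 'I_n -> {perm 'I_m}) (i : 'I_n) : R :=
  \sum_(x <- nth [::] (alloc setT [seq (P a, k a) | a <- enum 'I_n]) i)
     s ((P i)^-1 x)%g.

(* minimum / maximum of a list (0 on the empty list; only used on nonempty lists) *)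
Definition seqmin (R : realFieldType) (l : seq R) : R := foldr Num.min (head 0 l) l.
Definition seqmax (R : realFieldType) (l : seq R) : R := foldr Num.max (head 0 l) l.
Definition seqminn (l : seq nat) : nat := foldr minn (head 0%N l) l.

Definition SW_u (R : realFieldType) n m (s : 'I_m -> R) k P : R :=
  \sum_(i < n) utility s k P i.
Definition SW_e (R : realFieldType) n m (s : 'I_m -> R) k P : R :=
  seqmin [seq utility s k P i | i <- enum 'I_n].
Definition SW_n (R : realFieldType) n m (s : 'I_m -> R) k P : R :=
  \prod_(i < n) utility s k P i.

Definition permute_profile (n m : nat) (P : 'I_n -> {perm 'I_m}) (pi : {perm 'I_n})
  : 'I_n -> {perm 'I_m} := fun i => P (pi i).

Definition price_AtoP (R : realFieldType) n m
  (SW : ('I_n -> {perm 'I_m}) -> R) (P : 'I_n -> {perm 'I_m}) : R :=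
  seqmax [seq SW (permute_profile P pi) | pi <- enum {perm 'I_n}] /
  seqmin [seq SW (permute_profile P pi) | pi <- enum {perm 'I_n}].

Definition cpos (n : nat) (k : 'I_n -> nat) (i : 'I_n) : nat :=
  (\sum_(l < n | (l < i)%N) k l)%N.

From Pilot Require Import Defs.
From HB Require Import structures.
From mathcomp Require Import all_boot all_order all_algebra all_fingroup.
From mathcomp Require Import zify.
Import Order.TTheory GRing.Theory Num.Theory.
Local Open Scope ring_scope.

(* When agent i picks, only the c_i items taken by the earlier agents are gone, so
   her k_i picks occupy k_i distinct positions of her own ranking, all among the
   first c_i + k_i.  As the scores are nonincreasing, her utility lies between the
   sum of the scores at positions c_i+1..c_i+k_i and the sum of the k_i top scores,
   for every profile and in particular for every permuted one.  So each welfare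
   value is squeezed between the corresponding aggregates of these bounds; the
   lower bounds of all agents add up to the total score, and for the egalitarian
   welfare the upper bound comes from an agent with the least quota. *)

Section Scores.
Context {R : realFieldType} {m : nat} (s : 'I_m -> R).
Hypotheses (s_nonincr : scoring_vector s) (s_ge0 : forall j, 0 <= s j).

Definition score (t : nat) : R := if insub t is Some j then s j else 0.

Lemma score_ord (j : 'I_m) : score j = s j.
Proof. by rewrite /score valK. Qed.

Lemma score_out t : (m <= t)%N -> score t = 0.
Proof. by move=> mt; rewrite /score insubF // ltnNge mt. Qed.

Lemma score_ge0 t : 0 <= score t.
Proof. by rewrite /score; case: insub. Qed.

Lemma score_nonincr a b : (a <= b)%N -> score b <= score a.
Proof.
move=> ab; case: (ltnP b m) => bm; last by rewrite score_out // score_ge0.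
have am : (a < m)%N by apply: leq_ltn_trans bm.
by change (score (Ordinal bm) <= score (Ordinal am)); rewrite !score_ord; apply: s_nonincr.
Qed.

Lemma sum_score_ltn_sorted_le (L : seq nat) a : sorted ltn L -> all (leq a) L ->
  \sum_(t <- L) score t <= \sum_(t < size L) score (a + t).
Proof.
elim: L a => [|x L IH] a /=; first by rewrite big_nil big_ord0.
move=> Lsorted /andP[ax aL]; rewrite big_cons big_ord_recl /= addn0.
rewrite lerD ?score_nonincr //; apply: le_trans (IH x.+1 (path_sorted Lsorted) _) _.
  exact: order_path_min ltn_trans Lsorted.
apply: ler_sum => t _; apply: score_nonincr; rewrite /bump leq0n; lia.
Qed.

Lemma sum_score_gtn_sorted_ge (L : seq nat) N : sorted gtn L -> all (gtn N) L ->
  \sum_(t < size L) score (N.-1 - t) <= \sum_(t <- L) score t.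
Proof.
elim: L N => [|x L IH] N /=; first by rewrite big_nil big_ord0.
move=> Lsorted /andP[/= xN NL]; rewrite big_cons big_ord_recl /=.
rewrite lerD //; first by apply: score_nonincr; lia.
apply: le_trans (IH x (path_sorted Lsorted) _).
  by apply: ler_sum => t _; apply: score_nonincr; rewrite /bump leq0n; lia.
by apply: order_path_min Lsorted => p q r /= qp rq; apply: ltn_trans rq qp.
Qed.

Lemma sum_ord_score (P : pred nat) :
  \sum_(j < m | P j) s j = \sum_(0 <= t < m | P t) score t.
Proof. by rewrite big_mkord; apply: eq_bigr => j _; rewrite score_ord. Qed.

Lemma sum_prefix_score k : \sum_(j < m | (j < k)%N) s j = \sum_(0 <= t < k) score t.
Proof.
rewrite (sum_ord_score (fun j => j < k)%N) [RHS](big_nat_widen _ _ (m + k)) ?leq_addl //.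
rewrite [RHS](big_cat_nat (n := m)) ?leq_addr //=.
rewrite [X in _ = _ + X]big_nat_cond [X in _ = _ + X]big1 ?addr0 //.
by move=> t /andP[/andP[mt _] _]; apply: score_out.
Qed.

Lemma sum_block_score c k : (c + k <= m)%N ->
  \sum_(j < m | (c <= j < c + k)%N) s j = \sum_(c <= t < c + k) score t.
Proof.
move=> ckm; rewrite (sum_ord_score (fun j => c <= j < c + k)%N) [RHS](big_nat_widen _ _ m) //.
by rewrite (@big_nat_widenl _ _ _ c 0) //; apply: eq_bigl => t; rewrite andbC.
Qed.

Lemma sum_block_score_rev c k :
  \sum_(t < k) score ((c + k).-1 - t) = \sum_(c <= t < c + k) score t.
Proof.
rewrite [RHS]big_nat_rev (big_addn 0) addKn big_mkord.
by apply: eq_bigr => t _; congr score; lia.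
Qed.

Section Pick.
Variables (sigma : {perm 'I_m}) (A : {set 'I_m}) (k : nat).

(* The 0-based positions, in the ranking [sigma], of the items picked from [A]. *)
Let positions := [seq val j | j <- take k [seq j <- enum 'I_m | sigma j \in A]].

Lemma sum_pick_positions :
  \sum_(x <- Defs.pick sigma A k) s (sigma^-1 x)%g = \sum_(t <- positions) score t.
Proof.
rewrite /Defs.pick /pref_order filter_map -map_take !big_map.
by apply: eq_bigr => j _; rewrite permK score_ord.
Qed.

Lemma positions_sorted : sorted ltn positions.
Proof.
rewrite sorted_map; apply/take_sorted/sorted_filter; first exact: ltn_trans.
by rewrite -sorted_map val_enum_ord iota_ltn_sorted.
Qed.

Lemma size_positions : (size positions <= k)%N.
Proof. by rewrite size_map size_take; case: ifP => // /negbT; rewrite -leqNgt. Qed.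

Lemma positions_bounded c : (#|~: A| <= c)%N -> (c + k <= m)%N ->
  size positions = k /\ all (gtn (c + k)) positions.
Proof.
move=> Ac ckm; rewrite /positions.
set inA := (fun j => sigma j \in A); set e := enum 'I_m.
have out_le : (count (predC inA) e <= c)%N.
  rewrite (leq_trans _ Ac) // -(card_preimset (~: A) (@perm_inj _ sigma)).
  by rewrite cardE /enum_mem size_filter /e enumT; apply/eq_leq/eq_count => x; rewrite !inE.
have size_prefix : size (take (c + k) e) = (c + k)%N by rewrite size_takel // size_enum_ord.
have k_le_in : (k <= count inA (take (c + k) e))%N.
  have := count_predC inA (take (c + k) e).
  have : (count (predC inA) (take (c + k) e) <= count (predC inA) e)%N.
    by rewrite -{2}(cat_take_drop (c + k) e) count_cat leq_addr.
  rewrite size_prefix; lia.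
have -> : take k [seq j <- e | inA j] = take k [seq j <- take (c + k) e | inA j].
  by rewrite -{1}(cat_take_drop (c + k) e) filter_cat takel_cat // size_filter.
split; first by rewrite size_map size_takel // size_filter.
apply/allP => t /mapP [j /mem_take]; rewrite mem_filter => /andP[_ /(map_f val)].
by rewrite map_take val_enum_ord take_iota mem_iota /= => jck ->; lia.
Qed.

Lemma sum_pick_le_prefix :
  \sum_(x <- Defs.pick sigma A k) s (sigma^-1 x)%g <= \sum_(j < m | (j < k)%N) s j.
Proof.
rewrite sum_pick_positions sum_prefix_score.
apply: le_trans (@sum_score_ltn_sorted_le _ 0 positions_sorted _) _; first exact/allP.
rewrite -(big_mkord xpredT (fun t => score (0 + t))).
under eq_bigr do rewrite add0n.
rewrite [X in _ <= X](big_cat_nat (n := size positions)) ?size_positions //=.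
by rewrite lerDl sumr_ge0 // => t _; apply: score_ge0.
Qed.

Lemma sum_block_le_pick c : (#|~: A| <= c)%N -> (c + k <= m)%N ->
  \sum_(j < m | (c <= j < c + k)%N) s j
  <= \sum_(x <- Defs.pick sigma A k) s (sigma^-1 x)%g.
Proof.
move=> Ac ckm; have [size_k bounded] := positions_bounded _ Ac ckm.
rewrite sum_pick_positions sum_block_score // -sum_block_score_rev.
rewrite -(perm_big _ (permEl (perm_rev positions))) -size_k -(size_rev positions).
apply: sum_score_gtn_sorted_ge; first by rewrite rev_sorted positions_sorted.
by rewrite all_rev size_rev size_k.
Qed.

End Pick.
End Scores.

Lemma big_nat_addl (V : nmodType) (F : nat -> V) a b c :
  \sum_(a + b <= j < a + c) F j = \sum_(b <= j < c) F (a + j).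
Proof. by rewrite /index_iota subnDl iotaDl big_map. Qed.

Lemma sum_consecutive_blocks (V : nmodType) (F : nat -> V) (ks : seq nat) :
  \sum_(0 <= t < size ks)
     \sum_(sumn (take t ks) <= j < sumn (take t ks) + nth 0%N ks t) F j
  = \sum_(0 <= j < sumn ks) F j.
Proof.
elim: ks F => [|a ks IH] F /=; first by rewrite !big_geq.
rewrite big_nat_recl //= add0n [RHS](big_cat_nat (n := a)) ?leq_addr //=.
congr (_ + _); rewrite -[a in \sum_(a <= j < _) F j]addn0 big_nat_addl -IH.
by apply: eq_bigr => t _; rewrite -addnA big_nat_addl.
Qed.

Lemma sumn_take (l : seq nat) i : sumn (take i l) = (\sum_(0 <= t < i) nth 0%N l t)%N.
Proof.
elim: l i => [|x l IH] [|i]; try by rewrite big_geq.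
  by rewrite big1 // => t _; rewrite nth_nil.
by rewrite big_nat_recl //= IH.
Qed.

(* [A] is the set of items still available when the i-th agent picks. *)
Lemma nth_alloc_pick m (l : seq ({perm 'I_m} * nat)) (avail : {set 'I_m}) i :
  (i < size l)%N ->
  exists A : {set 'I_m},
    nth [::] (alloc avail l) i
      = Defs.pick (nth (1%g, 0%N) l i).1 A (nth (1%g, 0%N) l i).2
    /\ (#|avail :\: A| <= sumn (take i (map snd l)))%N.
Proof.
elim: l avail i => [|[sigma q] l IH] avail [|i] //= il.
  by exists avail; rewrite setDv cards0.
set picked := [set x in Defs.pick sigma avail q].
have [A [-> A_le]] := IH (avail :\: picked) i il.
exists A; split => //.
have split_out : avail :\: A \subset picked :|: ((avail :\: picked) :\: A).
  apply/subsetP => x; rewrite /picked !inE.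
  by case: (x \in A); case: (x \in avail); case: (x \in Defs.pick sigma avail q).
have picked_le : (#|picked| <= q)%N.
  rewrite cardsE; apply: leq_trans (card_size _) _.
  by rewrite size_take; case: ifP => // /negbT; rewrite -leqNgt.
apply: leq_trans (subset_leq_card split_out) _.
by apply: leq_trans (leq_card_setU _ _) _; apply: leq_add.
Qed.

Section SeqExtrema.
Context {R : realFieldType}.

Lemma foldr_min_mem (l : seq R) h : foldr Num.min h l \in h :: l.
Proof.
elim: l => [|y l IH] /=; first by rewrite mem_head.
case: leP => _; first by rewrite !inE eqxx orbT.
by move: IH; rewrite !inE => /orP[->|->]; rewrite ?orbT.
Qed.

Lemma foldr_max_mem (l : seq R) h : foldr Num.max h l \in h :: l.
Proof.
elim: l => [|y l IH] /=; first by rewrite mem_head.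
case: leP => _; last by rewrite !inE eqxx orbT.
by move: IH; rewrite !inE => /orP[->|->]; rewrite ?orbT.
Qed.

Lemma seqmin_mem (l : seq R) : l != [::] -> seqmin l \in l.
Proof.
case: l => // x l _; have := foldr_min_mem (x :: l) x.
by rewrite /seqmin inE => /orP[/eqP->|]; rewrite ?mem_head.
Qed.

Lemma seqmax_mem (l : seq R) : l != [::] -> seqmax l \in l.
Proof.
case: l => // x l _; have := foldr_max_mem (x :: l) x.
by rewrite /seqmax inE => /orP[/eqP->|]; rewrite ?mem_head.
Qed.

Lemma seqmin_le (l : seq R) x : x \in l -> seqmin l <= x.
Proof.
rewrite /seqmin; elim: l (head 0 l) => //= y l IH h.
by rewrite inE ge_min => /orP[/eqP->|/IH->]; rewrite ?lexx ?orbT.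
Qed.

End SeqExtrema.

Lemma foldr_minn_mem (l : seq nat) h : foldr minn h l \in h :: l.
Proof.
elim: l => [|y l IH] /=; first by rewrite mem_head.
case: leqP => _; first by rewrite !inE eqxx orbT.
by move: IH; rewrite !inE => /orP[->|->]; rewrite ?orbT.
Qed.

Lemma seqminn_mem (l : seq nat) : l != [::] -> seqminn l \in l.
Proof.
case: l => // x l _; have := foldr_minn_mem (x :: l) x.
by rewrite /seqminn inE => /orP[/eqP->|]; rewrite ?mem_head.
Qed.

Lemma seqminn_le (l : seq nat) x : x \in l -> (seqminn l <= x)%N.
Proof.
rewrite /seqminn; elim: l (head 0%N l) => //= y l IH h.
by rewrite inE geq_min => /orP[/eqP->|/IH->]; rewrite ?leqnn ?orbT.
Qed.

Lemma ler_ratio_bounds (R : realFieldType) (a b c d : R) :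
  0 <= d -> (d = 0 -> c = 0) -> 0 <= a <= c -> d <= b -> a / b <= c / d.
Proof.
move=> d_ge0 d0_c0 /andP[a_ge0 ac] db; have [d0|d_neq0] := eqVneq d 0.
  have c0 := d0_c0 d0; rewrite c0 in ac.
  by rewrite (@le_anti _ _ a 0) ?ac // c0 !mul0r.
have d_gt0 : 0 < d by rewrite lt_def d_neq0.
rewrite ler_pM ?invr_ge0 ?(le_trans d_ge0 db) // lef_pV2 ?posrE //.
exact: lt_le_trans db.
Qed.

Lemma price_AtoP_le (R : realFieldType) n m (SW : ('I_n -> {perm 'I_m}) -> R) P c d :
  0 <= d -> (d = 0 -> c = 0) -> (forall pi, d <= SW (permute_profile P pi) <= c) ->
  price_AtoP SW P <= c / d.
Proof.
move=> d_ge0 d0_c0 SW_bounds; rewrite /price_AtoP.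
set l := [seq SW (permute_profile P pi) | pi <- enum {perm 'I_n}].
have l_bounds v : v \in l -> d <= v <= c by case/mapP => pi _ ->.
have l_nonempty : l != [::].
  by rewrite -size_eq0 size_map -cardE -lt0n; apply/card_gt0P; exists 1%g.
have /l_bounds/andP[dmin _] := seqmin_mem _ l_nonempty.
have /l_bounds/andP[dmax maxc] := seqmax_mem _ l_nonempty.
by apply: ler_ratio_bounds; rewrite ?(le_trans d_ge0 dmax).
Qed.

Section Welfare.
Variables (R : realFieldType) (n m : nat) (s : 'I_m -> R) (k : 'I_n -> nat).
Hypotheses (s_nonincr : scoring_vector s) (s_gt0 : forall j, 0 < s j).
Hypothesis k_sum : (\sum_(i < n) k i)%N = m.

Let s_ge0 j : 0 <= s j. Proof. exact: ltW. Qed.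

Definition top_sum (i : 'I_n) : R := \sum_(j < m | (j < k i)%N) s j.
Definition block_sum (i : 'I_n) : R :=
  \sum_(j < m | (cpos k i <= j < cpos k i + k i)%N) s j.

Let quotas := [seq k i | i <- enum 'I_n].

Lemma nth_quotas (i : 'I_n) : nth 0%N quotas i = k i.
Proof. by rewrite (nth_map i) ?size_enum_ord // nth_ord_enum. Qed.

Lemma cpos_sumn_take i : cpos k i = sumn (take i quotas).
Proof.
rewrite sumn_take /cpos (big_nat_widen _ _ n) ?(ltnW (ltn_ord i)) // big_mkord.
by apply: eq_big => // j _; rewrite nth_quotas.
Qed.

Lemma sumn_quotas : sumn quotas = m.
Proof. by rewrite sumnE big_map big_enum. Qed.

Lemma cpos_add_le i : (cpos k i + k i <= m)%N.
Proof.
have i_lt : (i < size quotas)%N by rewrite size_map size_enum_ord.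
rewrite cpos_sumn_take -nth_quotas -sumn_rcons -take_nth //.
by rewrite -sumn_quotas -{2}(cat_take_drop i.+1 quotas) sumn_cat leq_addr.
Qed.

Lemma utility_bounds (Q : 'I_n -> {perm 'I_m}) i :
  block_sum i <= utility s k Q i <= top_sum i.
Proof.
have i_lt : (i < size [seq (Q a, k a) | a <- enum 'I_n])%N.
  by rewrite size_map size_enum_ord.
have [A [alloc_i A_le]] := @nth_alloc_pick _ _ setT _ i_lt.
rewrite /utility alloc_i (nth_map i) ?size_enum_ord // nth_ord_enum /=.
rewrite -map_comp -/quotas setTD -cpos_sumn_take in A_le.
apply/andP; split; last exact: sum_pick_le_prefix.
by apply: sum_block_le_pick; rewrite ?A_le ?cpos_add_le.
Qed.

Lemma sum_block_sum : \sum_(i < n) block_sum i = \sum_(j < m) s j.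
Proof.
under eq_bigr do
  rewrite /block_sum sum_block_score ?cpos_add_le // cpos_sumn_take -nth_quotas.
rewrite -(big_mkord xpredT (fun i =>
  \sum_(sumn (take i quotas) <= t < sumn (take i quotas) + nth 0%N quotas i) score s t)).
have size_quotas : size quotas = n by rewrite size_map size_enum_ord.
rewrite -[X in \sum_(0 <= i < X) _ = _]size_quotas sum_consecutive_blocks sumn_quotas.
by rewrite big_mkord; apply: eq_bigr => j _; rewrite score_ord.
Qed.

Lemma block_sum_ge0 i : 0 <= block_sum i.
Proof. exact: sumr_ge0. Qed.

Lemma block_sum_gt0 i : (0 < k i)%N -> 0 < block_sum i.
Proof.
move=> k_gt0; have c_lt : (cpos k i < m)%N by have := cpos_add_le i; lia.
rewrite /block_sum sum_block_score ?cpos_add_le // -(prednK k_gt0) addnS.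
rewrite big_nat_recl ?leq_addr //.
have -> : score s (cpos k i) = s (Ordinal c_lt) by rewrite -score_ord.
by rewrite ltr_wpDr ?s_gt0 // sumr_ge0 // => t _; apply: score_ge0.
Qed.

Lemma top_sum_le_total i : top_sum i <= \sum_(j < m) s j.
Proof.
rewrite [leRHS](bigID (fun j : 'I_m => (j < k i)%N)) /= lerDl.
exact: sumr_ge0.
Qed.

Lemma block_sum_eq0 i : block_sum i = 0 -> k i = 0%N.
Proof.
move=> block0; apply/eqP; rewrite -leqn0 leqNgt; apply/negP => /block_sum_gt0.
by rewrite block0 ltxx.
Qed.

Variable P : 'I_n -> {perm 'I_m}.

Lemma price_SW_u_le :
  price_AtoP (fun Q => SW_u s k Q) P <= (\sum_(i < n) top_sum i) / \sum_(j < m) s j.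
Proof.
apply: price_AtoP_le => [|total0|pi]; first exact: sumr_ge0.
  apply: big1 => i _; apply/le_anti; rewrite -{1}total0 top_sum_le_total.
  exact: sumr_ge0.
rewrite -sum_block_sum; apply/andP; split; apply: ler_sum => i _;
  by case/andP: (utility_bounds (permute_profile P pi) i).
Qed.

Lemma price_SW_e_le : (0 < n)%N ->
  price_AtoP (fun Q => SW_e s k Q) P <=
  (\sum_(j < m | (j < seqminn [seq k i | i <- enum 'I_n])%N) s j) /
  seqmin [seq block_sum i | i <- enum 'I_n].
Proof.
move=> n_gt0; set kmin := seqminn _.
have agents_nonempty (T : eqType) (f : 'I_n -> T) : [seq f i | i <- enum 'I_n] != [::].
  by rewrite -size_eq0 size_map size_enum_ord -lt0n.
have in_agents (i : 'I_n) : i \in enum 'I_n by rewrite mem_enum.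
have [i_min _ k_i_min] := mapP (seqminn_mem _ (agents_nonempty _ k)).
have [i_block _ min_block] := mapP (seqmin_mem _ (agents_nonempty _ block_sum)).
apply: price_AtoP_le => [|block0|pi]; first by rewrite min_block block_sum_ge0.
  rewrite min_block in block0; have kmin0 : kmin = 0%N.
    by apply/eqP; rewrite -leqn0 -(block_sum_eq0 _ block0) seqminn_le ?map_f.
  by rewrite kmin0; apply: big1 => j; rewrite ltn0.
set U := utility s k (permute_profile P pi).
have [i_U _ min_U] := mapP (seqmin_mem _ (agents_nonempty _ U)).
rewrite /SW_e min_U; apply/andP; split.
  apply: le_trans (seqmin_le _ _ (map_f block_sum (in_agents i_U))) _.
  by case/andP: (utility_bounds (permute_profile P pi) i_U).
rewrite -min_U; apply: le_trans (seqmin_le _ _ (map_f _ (in_agents i_min))) _.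
by rewrite /kmin k_i_min; case/andP: (utility_bounds (permute_profile P pi) i_min).
Qed.

Lemma price_SW_n_le :
  price_AtoP (fun Q => SW_n s k Q) P
  <= (\prod_(i < n) top_sum i) / \prod_(i < n) block_sum i.
Proof.
apply: price_AtoP_le => [|/eqP/prodf_eq0[i _ /eqP/(block_sum_eq0 _) k0]|pi].
- by apply: prodr_ge0 => i _; apply: block_sum_ge0.
- by rewrite (bigD1 i) //= [top_sum i]big1 ?mul0r // => j; rewrite k0 ltn0.
apply/andP; split; apply: ler_prod => i _;
  case/andP: (utility_bounds (permute_profile P pi) i) => lo hi.
- by rewrite block_sum_ge0.
- by rewrite hi (le_trans (block_sum_ge0 i)).
Qed.

End Welfare.

Theorem mainTheorem8 (R : realFieldType) (n m : nat) (s : 'I_m -> R)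
  (k : 'I_n -> nat) (P : 'I_n -> {perm 'I_m}) :
  (0 < n)%N ->
  scoring_vector s ->
  (forall j, 0 < s j) ->
  (\sum_(i < n) k i)%N = m ->
  let kmin := seqminn [seq k i | i <- enum 'I_n] in
  [/\ price_AtoP (fun Q => SW_u s k Q) P <=
        (\sum_(i < n) \sum_(j < m | (j < k i)%N) s j) / (\sum_(j < m) s j),
      price_AtoP (fun Q => SW_e s k Q) P <=
        (\sum_(j < m | (j < kmin)%N) s j) /
        seqmin [seq \sum_(j < m | (cpos k i <= j < cpos k i + k i)%N) s j
               | i <- enum 'I_n]
    & price_AtoP (fun Q => SW_n s k Q) P <=
        (\prod_(i < n) \sum_(j < m | (j < k i)%N) s j) /
        (\prod_(i < n) \sum_(j < m | (cpos k i <= j < cpos k i + k i)%N) s j)].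
Proof.
move=> n_gt0 s_nonincr s_gt0 k_sum kmin; split.
- exact: price_SW_u_le.
- exact: price_SW_e_le.
- exact: price_SW_n_le.
Qed.
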